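(* Let $\mathit{VI}$ be a finite set of variables with $\#\mathit{VI}=n$. If $j,k\in\mathbb{N}$ with $1\le j<k\le n$, then $\mathrm{MI}(\mathit{TSD}_k)\cap\mathit{TSD}_j=\mathrm{dAtoms}(\mathit{TSD}_j)$.
   Context: $\mathit{SG}=\wp(\mathit{VI})\setminus\{\emptyset\}$, $\mathit{SH}=\wp(\mathit{SG})$ ordered by inclusion. For $1\le m\le n$, $\rho_{\mathit{TSD}_m}(sh)=\{\,S\in\mathit{SG}\mid \forall T\subseteq S:\ \#T<m\implies S=\bigcup\{U\in sh\mid T\subseteq U\subseteq S\}\,\}$ and $\mathit{TSD}_m=\rho_{\mathit{TSD}_m}(\mathit{SH})$, a complete lattice under inclusion (meet = intersection, top $\mathit{SG}$). $\mathrm{MI}(C)$: meet-irreducible elements of $C$ ($x=y\wedge z\Rightarrow x=y$ or $x=z$); $\mathrm{dAtoms}(C)$: dual-atoms ($x\ne\top$ with $x\le y<\top\Rightarrow x=y$). *)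

From mathcomp Require Import all_boot.
Set Implicit Arguments. Unset Strict Implicit. Unset Printing Implicit Defensive.

Section TSD.
Variable VI : finType.

Definition SG : {set {set VI}} := [set S : {set VI} | S != set0].

Definition inSH (sh : {set {set VI}}) : bool := sh \subset SG.

Definition rhoTSD (m : nat) (sh : {set {set VI}}) : {set {set VI}} :=
  [set S in SG | [forall T : {set VI},
     ((T \subset S) && (#|T| < m)) ==>
       (S == \bigcup_(U in sh | (T \subset U) && (U \subset S)) U)]].

Definition TSD (m : nat) : {set {set {set VI}}} :=
  [set sh | inSH sh && [exists sh0, inSH sh0 && (rhoTSD m sh0 == sh)]].

(* Meet-irreducible elements of a family C of sets ordered by inclusion,
   whose meet is intersection and whose top is SG; following the usual
   convention the top element is excluded. *)
Definition MI (C : {set {set {set VI}}}) : {set {set {set VI}}} :=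
  [set x in C | (x != SG) &&
     [forall y in C, forall z in C, (x == y :&: z) ==> ((x == y) || (x == z))]].

Definition dAtoms (C : {set {set {set VI}}}) : {set {set {set VI}}} :=
  [set x in C | (x != SG) &&
     [forall y in C, ((x \subset y) && (y != SG)) ==> (x == y)]].
End TSD.

From mathcomp Require Import all_boot.
Set Implicit Arguments. Unset Strict Implicit. Unset Printing Implicit Defensive.

(* rho_TSD_m is a closure operator on SH, so TSD_m consists of the rho_m-closed
   elements of SH; they form a family increasing in m and containing SG.  If x
   is rho_j-closed, j < k and S is any sharing group, then S |: x is
   rho_k-closed: a subset T with #|T| < j of a group outside S |: x can be
   enlarged by one element so as to rule S out of the covering union.  Hence an
   element of TSD_j that is meet-irreducible in TSD_k misses exactly one
   sharing group, since otherwise it is the meet of two strictly larger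
   elements.  Conversely, adding to a rho_j-closed x a maximal sharing group
   outside x keeps it rho_j-closed, so a dual atom of TSD_j also misses exactly
   one sharing group.  Finally, an element missing exactly one sharing group
   has no strictly larger element but SG, so it is both meet-irreducible and a
   dual atom in every family of subsets of SG containing it. *)

Section TSDLattice.
Variable VI : finType.
Implicit Types (sh x y : {set {set VI}}) (S T : {set VI}).

Definition cover_between sh T S := \bigcup_(U in sh | (T \subset U) && (U \subset S)) U.

Lemma cover_between_sub sh T S : cover_between sh T S \subset S.
Proof. by apply/bigcupsP => U /andP[_ /andP[_]]. Qed.

Lemma cover_betweenS sh T T' S :
  T \subset T' -> cover_between sh T' S \subset cover_between sh T S.
Proof.
move=> TT'; apply/bigcupsP => U /andP[Ush /andP[T'U US]].
by apply: bigcup_max => //; rewrite Ush US (subset_trans TT' T'U).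
Qed.

Lemma cover_between_setU1 sh S1 T S : ~~ ((T \subset S1) && (S1 \subset S)) ->
  cover_between (S1 |: sh) T S = cover_between sh T S.
Proof.
move=> S1out; apply: eq_bigl => U; rewrite in_setU1.
by case: eqP => [->|_]; rewrite ?(negbTE S1out) ?andbF.
Qed.

Lemma rhoTSDP m sh S : reflect
  (S \in SG VI /\ forall T, T \subset S -> #|T| < m -> S \subset cover_between sh T S)
  (S \in rhoTSD m sh).
Proof.
rewrite [X in reflect _ X]inE; apply: (iffP andP) => [[SG_S /forallP coverS]|[SG_S coverS]].
  split=> // T TS Tm; move/implyP: (coverS T); rewrite TS Tm => /(_ isT)/eqP.
  by rewrite /cover_between => <-.
split=> //; apply/forallP => T; apply/implyP => /andP[TS Tm].
by rewrite eqEsubset coverS // cover_between_sub.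
Qed.

Lemma rhoTSD_sub m sh : rhoTSD m sh \subset SG VI.
Proof. by apply/subsetP => S /rhoTSDP[]. Qed.

Lemma sub_rhoTSD m sh : sh \subset SG VI -> sh \subset rhoTSD m sh.
Proof.
move=> shSG; apply/subsetP => S Ssh; apply/rhoTSDP; split; first exact: subsetP Ssh.
by move=> T TS _; apply: (bigcup_max S); rewrite ?Ssh ?TS ?subxx.
Qed.

Lemma rhoTSD_idem m sh : rhoTSD m (rhoTSD m sh) = rhoTSD m sh.
Proof.
apply/eqP; rewrite eqEsubset sub_rhoTSD ?rhoTSD_sub // andbT.
apply/subsetP => S /rhoTSDP[SG_S coverS]; apply/rhoTSDP; split=> // T TS Tm.
apply/subsetP => v /(subsetP (coverS T TS Tm)) /bigcupP[U /andP[rhoU /andP[TU US]] vU].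
case/rhoTSDP: rhoU => _ coverU.
have /bigcupP[V /andP[Vsh /andP[TV VU]] vV] := subsetP (coverU T TU Tm) v vU.
by apply/bigcupP; exists V; rewrite // Vsh TV (subset_trans VU US).
Qed.

Lemma rhoTSD_leq j k sh : j <= k -> rhoTSD k sh \subset rhoTSD j sh.
Proof.
move=> jk; apply/subsetP => S /rhoTSDP[SG_S coverS]; apply/rhoTSDP.
by split=> // T TS Tj; apply: coverS (leq_trans Tj jk).
Qed.

Lemma TSDP m x : reflect (x \subset SG VI /\ rhoTSD m x \subset x) (x \in TSD VI m).
Proof.
rewrite inE /inSH; apply: (iffP andP) => [[xSG /existsP[sh /andP[_ /eqP <-]]]|[xSG closed]].
  by rewrite rhoTSD_idem rhoTSD_sub.
split=> //; apply/existsP; exists x.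
by rewrite xSG eqEsubset closed sub_rhoTSD.
Qed.

Lemma TSD_sub m x : x \in TSD VI m -> x \subset SG VI.
Proof. by case/TSDP. Qed.

Lemma TSD_leq j k x : j <= k -> x \in TSD VI j -> x \in TSD VI k.
Proof.
move=> jk /TSDP[xSG closed]; apply/TSDP; split=> //.
exact: subset_trans (rhoTSD_leq _ jk) closed.
Qed.

Lemma setU1_TSD_of j k x S1 : x \in TSD VI j -> S1 \in SG VI ->
  (forall S, S \notin S1 |: x -> S \in rhoTSD k (S1 |: x) -> S \in rhoTSD j x) ->
  S1 |: x \in TSD VI k.
Proof.
move=> /TSDP[xSG closed] SG_S1 rho_new; apply/TSDP.
rewrite subUset sub1set SG_S1 xSG; split=> //; apply/subsetP => S rhoS.
have [// | S_new] := boolP (S \in S1 |: x).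
have Sx := subsetP closed _ (rho_new S S_new rhoS).
by rewrite in_setU1 Sx orbT in S_new.
Qed.

Lemma setU1_TSD j k x S1 : j < k -> x \in TSD VI j -> S1 \in SG VI ->
  S1 |: x \in TSD VI k.
Proof.
move=> jk xj SG_S1; apply: (setU1_TSD_of xj) => // S; rewrite in_setU1 negb_or.
case/andP=> SS1 _ /rhoTSDP[SG_S coverS]; apply/rhoTSDP; split=> // T TS Tj.
have [T' [TT' T'S T'k S1out]] : exists T', [/\ T \subset T', T' \subset S, #|T'| < k
    & ~~ ((T' \subset S1) && (S1 \subset S))].
  have [S_S1 | [a /setDP[aS aS1]]] := set_0Vmem (S :\: S1).
    exists T; split; rewrite ?(ltn_trans Tj jk) //.
    apply: contra SS1 => /andP[_ S1S]; rewrite eqEsubset S1S andbT.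
    by rewrite -setD_eq0 S_S1.
  exists (a |: T); split; rewrite ?subsetUr ?subUset ?sub1set ?aS //.
    by rewrite cardsU1 (leq_ltn_trans _ jk) // (leq_trans _ Tj) // -add1n leq_add2r leq_b1.
  by rewrite (negbTE aS1).
apply: subset_trans (cover_betweenS _ _ TT').
by rewrite -(cover_between_setU1 _ S1out) coverS.
Qed.

Lemma setU1_max_TSD m x S1 : x \in TSD VI m -> S1 \in SG VI :\: x ->
  {in SG VI :\: x, forall S, S1 \subset S -> S = S1} -> S1 |: x \in TSD VI m.
Proof.
move=> xm /setDP[SG_S1 _] S1max; apply: (setU1_TSD_of xm) => // S.
rewrite in_setU1 negb_or => /andP[SS1 Sx] /rhoTSDP[SG_S coverS].
apply/rhoTSDP; split=> // T TS Tm; rewrite -(@cover_between_setU1 x S1) ?coverS //.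
by apply: contra SS1 => /andP[_ /(S1max S)->] //; rewrite inE Sx.
Qed.

Lemma sub_coatom x y : #|SG VI :\: x| = 1 -> x \subset y -> y \subset SG VI ->
  y = x \/ y = SG VI.
Proof.
move=> /eqP/cards1P[S1 xS1] xy ySG.
have missing S : S \in SG VI -> S \notin x -> S = S1.
  by move=> SG_S Sx; apply/set1P; rewrite -xS1 inE Sx.
have [S1y | S1y] := boolP (S1 \in y).
  right; apply/eqP; rewrite eqEsubset ySG; apply/subsetP => S SG_S.
  by have [/(subsetP xy)|/(missing S SG_S)->] := boolP (S \in x).
left; apply/eqP; rewrite eqEsubset xy andbT; apply/subsetP => S Sy.
by apply/negPn/negP => /(missing S (subsetP ySG S Sy)) eqS; rewrite -eqS Sy in S1y.
Qed.

Lemma coatom_neq x : #|SG VI :\: x| = 1 -> x != SG VI.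
Proof. by apply: contra_eqN => /eqP->; rewrite setDv cards0. Qed.

Lemma coatom_MI (C : {set {set {set VI}}}) x : {in C, forall y, y \subset SG VI} ->
  x \in C -> #|SG VI :\: x| = 1 -> x \in MI C.
Proof.
move=> CSG xC x1; have x_neq := coatom_neq x1.
rewrite inE xC x_neq; apply/forall_inP => y yC; apply/forall_inP => z zC.
apply/implyP => /eqP x_yz.
have [xy xz] : x \subset y /\ x \subset z by rewrite x_yz subsetIl subsetIr.
have [-> | ySG] := sub_coatom x1 xy (CSG y yC); first by rewrite eqxx.
have [-> | zSG] := sub_coatom x1 xz (CSG z zC); first by rewrite eqxx orbT.
by rewrite x_yz ySG zSG setIid eqxx in x_neq.
Qed.

Lemma coatom_dAtoms (C : {set {set {set VI}}}) x : {in C, forall y, y \subset SG VI} ->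
  x \in C -> #|SG VI :\: x| = 1 -> x \in dAtoms C.
Proof.
move=> CSG xC x1; rewrite inE xC coatom_neq //=; apply/forall_inP => y yC; apply/implyP => /andP[xy y_neq].
have [-> // | ySG] := sub_coatom x1 xy (CSG y yC).
by rewrite ySG eqxx in y_neq.
Qed.

Lemma MI_TSD_coatom j k x : j < k -> x \in TSD VI j -> x \in MI (TSD VI k) ->
  #|SG VI :\: x| = 1.
Proof.
move=> jk xj; rewrite inE => /and3P[_ x_neq /forall_inP xMI].
have x_lt : 0 < #|SG VI :\: x|.
  by rewrite card_gt0; apply: contra x_neq; rewrite setD_eq0 eqEsubset (TSD_sub xj).
apply/eqP; rewrite eqn_leq x_lt andbT leqNgt; apply/negP.
case/card_gt1P => S1 [S2 [/setDP[SG_S1 S1x] /setDP[SG_S2 S2x] S12]].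
have x_meet : x = (S1 |: x) :&: (S2 |: x).
  by apply/setP => S; rewrite !inE -orb_andl; case: eqP => [->|]; rewrite ?(negbTE S12).
move/forall_inP: (xMI _ (setU1_TSD jk xj SG_S1)).
move/(_ _ (setU1_TSD jk xj SG_S2)); rewrite -x_meet eqxx => /orP[]/eqP x_eq.
  by rewrite x_eq setU11 in S1x.
by rewrite x_eq setU11 in S2x.
Qed.

Lemma dAtoms_TSD_coatom m x : x \in dAtoms (TSD VI m) -> #|SG VI :\: x| = 1.
Proof.
rewrite inE => /and3P[xm x_neq /forall_inP xdA].
have [S0 S0out] : exists S0, S0 \in SG VI :\: x.
  by apply/set0Pn; apply: contra x_neq; rewrite setD_eq0 eqEsubset (TSD_sub xm).
have [S1 S1out S1max] := arg_maxnP (fun S => #|S|) S0out.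
have S1x : S1 \notin x by case/setDP: S1out.
have maximal : {in SG VI :\: x, forall S, S1 \subset S -> S = S1}.
  by move=> S Sout S1S; apply/eqP; rewrite eq_sym eqEcard S1S; apply: S1max.
have x_new : x != S1 |: x by apply: contraNneq S1x => ->; rewrite setU11.
have := xdA _ (setU1_max_TSD xm S1out maximal).
rewrite subsetUr (negbTE x_new) /= implybF negbK => /eqP full.
apply/eqP/cards1P; exists S1; apply/setP => S; rewrite -full !inE.
by case: (S =P S1) => [->|_]; rewrite ?S1x ?andNb.
Qed.

End TSDLattice.

Theorem corollary4p6 (VI : finType) (j k : nat) :
  1 <= j -> j < k -> k <= #|VI| ->
  MI (TSD VI k) :&: TSD VI j = dAtoms (TSD VI j).
Proof.
move=> _ jk _; apply/setP => x; rewrite inE.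
have TSD_SG m : {in TSD VI m, forall y : {set {set VI}}, y \subset SG VI}.
  by move=> y /TSD_sub.
apply/andP/idP => [[xMI xj] | xdA].
  exact: coatom_dAtoms (TSD_SG j) xj (MI_TSD_coatom jk xj xMI).
have xj : x \in TSD VI j by case/setIdP: xdA.
by split=> //; apply: coatom_MI (TSD_SG k) (TSD_leq (ltnW jk) xj) (dAtoms_TSD_coatom xdA).
Qed.
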